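(* Let $\{G^i\}_{i\in I}$, $G^i=(V,\{S^i_v\}_{v\in V},\{u^i_v\}_{v\in V})$, be a finite family of games over the same graph $\Gamma=(V,E)$. If $\langle s^i_v\rangle_{v\in V}\in NE(G^i)$ for each $i\in I$, then $\langle\langle s^i_v\rangle_{i\in I}\rangle_{v\in V}\in NE(\prod_{i\in I}G^i)$.
   Context: A game over a finite simple undirected graph $\Gamma=(V,E)$ is a strategic game with player set $V$, finite strategy sets, and real pay-off functions $u_v$ depending only on the strategies of $v$ and its neighbours. $NE(G)$ is the set of pure Nash equilibria. The product $\prod_{i\in I}G^i$ is the game with player set $V$, strategy sets $S_v=\prod_{i\in I}S^i_v$, and pay-offs $u_v=\sum_{i\in I}u^i_v$ (where $u^i_v$ is evaluated at the $i$-th components of the profile); a profile of the product is written $\langle\langle s^i_v\rangle_{i\in I}\rangle_{v\in V}$. *)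

From HB Require Import structures.
From mathcomp Require Import all_boot all_order all_algebra.
From mathcomp Require Import reals.
Set Implicit Arguments. Unset Strict Implicit. Unset Printing Implicit Defensive.
Import Order.TTheory GRing.Theory Num.Theory.
Local Open Scope ring_scope.

Definition simple_graph (V : finType) (e : rel V) : Prop :=
  symmetric e /\ irreflexive e.

Definition profile (V : finType) (S : V -> finType) := forall v : V, S v.

Definition local_payoffs (R : realType) (V : finType) (e : rel V)
    (S : V -> finType) (u : V -> profile S -> R) : Prop :=
  forall (v : V) (p q : profile S),
    (forall w : V, (w == v) || e v w -> p w = q w) -> u v p = u v q.

Definition game_over (R : realType) (V : finType) (e : rel V)
    (S : V -> finType) (u : V -> profile S -> R) : Prop :=
  simple_graph e /\ local_payoffs e u.

Definition is_NE (R : realType) (V : finType) (S : V -> finType)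
    (u : V -> profile S -> R) (s : profile S) : Prop :=
  forall (v : V) (x : S v), u v (dfwith s x) <= u v s.

Definition prod_strat (I V : finType) (S : I -> V -> finType) (v : V) : finType :=
  {dffun forall i : I, S i v}.

Definition prod_payoff (R : realType) (I V : finType) (S : I -> V -> finType)
    (u : forall i : I, V -> profile (S i) -> R)
    (v : V) (p : profile (prod_strat S)) : R :=
  \sum_(i : I) u i v (fun w => p w i).

Definition prod_profile (I V : finType) (S : I -> V -> finType)
    (s : forall i : I, profile (S i)) : profile (prod_strat S) :=
  fun v => [ffun i => s i v].

From HB Require Import structures.
From mathcomp Require Import all_boot all_order all_algebra.
From mathcomp Require Import reals.
Local Open Scope ring_scope.
Import Order.TTheory GRing.Theory Num.Theory.

(* Each pay-off of the product is the sum of the component pay-offs, and a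
   unilateral deviation of v in the product is, in every component game, a
   unilateral deviation of v; so the inequalities add up termwise. *)

Section ProductProfiles.

Context {I V : finType} {S : I -> V -> finType}.

Lemma prod_profileE (s : forall i : I, profile (S i)) (i : I) (w : V) :
  prod_profile s w i = s i w.
Proof. by rewrite /prod_profile ffunE. Qed.

Lemma dfwith_prod_profileE (s : forall i : I, profile (S i)) {v : V}
    (x : prod_strat S v) (i : I) (w : V) :
  dfwith (prod_profile s) x w i = dfwith (s i) (x i) w.
Proof.
rewrite /dfwith; case: eqP => [Ev | _]; last exact: prod_profileE.
by case: w / Ev.
Qed.

End ProductProfiles.

Lemma payoff_ext {R : realType} {V : finType} {e : rel V} {S : V -> finType}
    {u : V -> profile S -> R} (v : V) {p q : profile S} :
  local_payoffs e u -> (forall w, p w = q w) -> u v p = u v q.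
Proof. by move=> local_u pq; apply: local_u => w _. Qed.

Theorem lemma18 (R : realType) (I V : finType) (e : rel V)
    (S : I -> V -> finType) (u : forall i : I, V -> profile (S i) -> R)
    (Hgame : forall i : I, game_over e (u i))
    (s : forall i : I, profile (S i))
    (Hs : forall i : I, is_NE (u i) (s i)) :
  is_NE (prod_payoff u) (prod_profile s).
Proof.
move=> v x; apply: ler_sum => i _.
have [_ local_ui] := Hgame i.
have deviation := payoff_ext v local_ui (dfwith_prod_profileE s x i).
have equilibrium := payoff_ext v local_ui (prod_profileE s i).
by rewrite deviation equilibrium; apply: Hs.
Qed.
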